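(* Let $A$ be a multiset of points in $\mathbb{Z}^2$ with $|A|\geq 6$ (counting multiplicities). If $\boldsymbol{p}\in\mathbb{R}^2$ is a point with $\boldsymbol{p}\notin A$ that has half-space depth $2$ with respect to $A$, then $A$ can be partitioned into two submultisets $A_1,A_2$ with $\boldsymbol{p}\in\conv(A_1)\cap\conv(A_2)$.
   Context: A point $\boldsymbol{p}$ has half-space depth $t$ with respect to a multiset $A$ if every closed half-plane containing $\boldsymbol{p}$ contains at least $t$ points of $A$, counted with multiplicity. A partition of a multiset into submultisets means the multiplicities of each element in the parts sum to its multiplicity in the multiset. *)

From HB Require Import structures.
From mathcomp Require Import all_boot all_order all_algebra.
From mathcomp Require Import reals.
Set Implicit Arguments. Unset Strict Implicit. Unset Printing Implicit Defensive.
Import Order.TTheory GRing.Theory Num.Theory.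
Local Open Scope ring_scope.

(* A multiset of n points of Z^2 is an indexed family a : 'I_n -> int * int
   (multiplicity = number of indices with that value).  Its embedding in R^2: *)
Definition ptR (R : realType) (z : int * int) : R * R := (z.1%:~R, z.2%:~R).

Definition dot (R : realType) (u x : R * R) : R := u.1 * x.1 + u.2 * x.2.

Definition halfspace_depth_ge (R : realType) (n : nat) (a : 'I_n -> int * int)
    (p : R * R) (t : nat) : Prop :=
  forall (u : R * R) (c : R), u != (0, 0) -> dot u p <= c ->
    (t <= #|[set i : 'I_n | (dot u (ptR R (a i)) <= c)%R]|)%N.

Definition in_conv (R : realType) (n : nat) (a : 'I_n -> int * int)
    (S : {set 'I_n}) (p : R * R) : Prop :=
  exists w : 'I_n -> R,
    [/\ forall i, 0 <= w i,
        forall i, i \notin S -> w i = 0,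
        \sum_(i < n) w i = 1,
        \sum_(i < n) w i * (ptR R (a i)).1 = p.1
      & \sum_(i < n) w i * (ptR R (a i)).2 = p.2].

From HB Require Import structures.
From mathcomp Require Import all_boot all_order all_algebra.
From mathcomp Require Import reals.
From mathcomp Require Import lra ring zify.
Set Implicit Arguments. Unset Strict Implicit. Unset Printing Implicit Defensive.
Import Order.TTheory GRing.Theory Num.Theory.
Local Open Scope ring_scope.

(* List the points of A cyclically by their angle around p, unwinding the angles
   into a nondecreasing sequence that gains a full turn every n ranks.  Depth 2
   forces points two ranks apart to be at most a half-turn apart: otherwise a
   closed half-plane bounded by a line through p would contain only the point in
   between.  Hence the points of even rank, and those of odd rank, go around p
   with gaps of at most a half-turn, so three of them cut the turn into arcs of
   at most a half-turn each, and p lies in their triangle.  For odd n the odd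
   ranks have one gap of three steps; since n >= 6, starting the enumeration at
   a suitable rank keeps it within a half-turn. *)

Lemma intr_range01 (R : realDomainType) (m : int) :
  -1 < m%:~R :> R -> m%:~R < 2 :> R -> m = 0 \/ m = 1.
Proof. by rewrite -[-1 : R]/((-1 : int)%:~R) -[2 : R]/((2 : int)%:~R) !ltr_int; lia. Qed.

Section PseudoAngle.
Variable R : realType.
Implicit Types (a b : R * R) (s t : R).

Definition cross a b : R := a.1 * b.2 - a.2 * b.1.

Lemma crossC a b : cross b a = - cross a b.
Proof. rewrite /cross; ring. Qed.

Lemma crossNl a b : cross (- a) b = - cross a b.
Proof. rewrite /cross /=; ring. Qed.

Lemma crossNr a b : cross a (- b) = - cross a b.
Proof. rewrite /cross /=; ring. Qed.

Lemma dot_self_gt0 a : a != 0 -> 0 < dot a a.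
Proof.
case: a => x y; rewrite /dot /= -!expr2 => a0.
rewrite lt_def paddr_eq0 ?addr_ge0 ?sqr_ge0 // !sqrf_eq0 andbT.
by move: a0; rewrite -[0]/(0, 0) xpair_eqE.
Qed.

Lemma cross_dot_neq0 a b : a != 0 -> b != 0 -> cross a b = 0 -> dot a b != 0.
Proof.
move=> a0 b0 ab0; apply/eqP => dab0.
have lagrange : dot a a * dot b b = cross a b ^+ 2 + dot a b ^+ 2.
  by rewrite /cross /dot; ring.
have := mulr_gt0 (dot_self_gt0 a0) (dot_self_gt0 b0).
by rewrite lagrange ab0 dab0 expr0n addr0 ltxx.
Qed.

Definition upper a : bool := (0 < a.2) || ((a.2 == 0) && (0 < a.1)).

Lemma upper_ge0 a : upper a -> 0 <= a.2.
Proof. by case/orP=> [/ltW|/andP[/eqP-> _]]. Qed.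

Lemma upper_gt0 a : upper a -> a.1 <= 0 -> 0 < a.2.
Proof. case/orP=> [//|/andP[_ ?] ?]; lra. Qed.

Lemma upper_neq0 a : upper a -> a != 0.
Proof.
case: a => x y /orP[y0|/andP[_ x0]]; rewrite -[0]/(0, 0) xpair_eqE negb_and.
  by rewrite orbC gt_eqF.
by rewrite gt_eqF.
Qed.

Lemma upperN a : a != 0 -> upper (- a) = ~~ upper a.
Proof.
case: a => x y; rewrite -[0]/(0, 0) xpair_eqE negb_and /upper /= !oppr_gt0 oppr_eq0.
rewrite negb_or negb_and -!leNgt.
by case: (ltrgtP y 0) => //= _; case: ltrgtP.
Qed.

(* Pseudo-angles, measured in quarter-turns: [upper_angle] increases with the
   argument on the upper half-plane, from 0 on the positive x-axis towards 2 on
   the negative one, and [pangle] extends it to [0, 4) by central symmetry. *)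
Definition upper_angle a : R := 1 - a.1 / (`|a.1| + a.2).

Lemma upper_denom_gt0 a : upper a -> 0 < `|a.1| + a.2.
Proof.
move=> ua; have := upper_ge0 ua.
by case: (ler0P a.1) => a1; [have := upper_gt0 ua a1|]; lra.
Qed.

Lemma upper_angle_bound a : upper a -> 0 <= upper_angle a < 2.
Proof.
move=> ua; have d0 := upper_denom_gt0 ua.
suff /andP[? ?] : -1 < a.1 / (`|a.1| + a.2) <= 1 by rewrite /upper_angle; lra.
rewrite ltr_pdivlMr // ler_pdivrMr // mul1r mulN1r.
by have := upper_ge0 ua; case: (ler0P a.1) => a1 *; [have := upper_gt0 ua a1|]; lra.
Qed.

Lemma upper_angle_le a b : upper a -> upper b ->
  (upper_angle a <= upper_angle b) = (0 <= cross a b).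
Proof.
move=> ua ub; have da := upper_denom_gt0 ua; have db := upper_denom_gt0 ub.
have := upper_ge0 ua; have := upper_ge0 ub; have := upper_gt0 ua; have := upper_gt0 ub.
rewrite /upper_angle /cross lerD2l lerN2 ler_pdivrMr // mulrAC ler_pdivlMr //.
by case: (ler0P a.1); case: (ler0P b.1) => *; apply/idP/idP => ?; nra.
Qed.

Definition pangle a : R := if upper a then upper_angle a else 2 + upper_angle (- a).

Lemma pangle_bound a : a != 0 -> 0 <= pangle a < 4.
Proof.
move=> a0; rewrite /pangle; case: ifP => ua.
  by have /andP[? ?] := upper_angle_bound ua; lra.
have /andP[? ?] : 0 <= upper_angle (- a) < 2 by apply: upper_angle_bound; rewrite upperN ?ua.
lra.
Qed.

Lemma cross_ge0_pangle a b : a != 0 -> b != 0 ->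
  (0 <= cross a b) = (0 <= pangle b - pangle a <= 2) || (pangle b - pangle a <= -2).
Proof.
move=> a0 b0; rewrite /pangle.
case: (boolP (upper a)) => ua; case: (boolP (upper b)) => ub.
- rewrite -upper_angle_le //.
  case/andP: (upper_angle_bound ua) (upper_angle_bound ub) => ? ? /andP[? ?].
  by repeat case: lerP => //= ?; exfalso; lra.
- have ub' : upper (- b) by rewrite upperN.
  have -> : cross a b = cross (- b) a by rewrite crossNl [cross b a]crossC opprK.
  rewrite -upper_angle_le //.
  case/andP: (upper_angle_bound ua) (upper_angle_bound ub') => ? ? /andP[? ?].
  by repeat case: lerP => //= ?; exfalso; lra.
- have ua' : upper (- a) by rewrite upperN.
  have -> : cross a b = cross b (- a) by rewrite crossNr [cross b a]crossC opprK.
  rewrite -upper_angle_le //.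
  case/andP: (upper_angle_bound ua') (upper_angle_bound ub) => ? ? /andP[? ?].
  by repeat case: lerP => //= ?; exfalso; lra.
- have [ua' ub'] : upper (- a) /\ upper (- b) by rewrite !upperN.
  have -> : cross a b = cross (- a) (- b) by rewrite crossNl crossNr opprK.
  rewrite -upper_angle_le //.
  case/andP: (upper_angle_bound ua') (upper_angle_bound ub') => ? ? /andP[? ?].
  by repeat case: lerP => //= ?; exfalso; lra.
Qed.

Lemma upper_cross0_dot_gt0 a b : upper a -> upper b -> cross a b = 0 -> 0 < dot a b.
Proof.
rewrite /upper /cross /dot.
case/orP=> [a2|/andP[/eqP a2 a1]]; case/orP=> [b2|/andP[/eqP b2 b1]] ab0.
- have : 0 < a.2 * (b.1 ^+ 2 + b.2 ^+ 2) by apply: mulr_gt0 => //; nra.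
  have -> : a.2 * (b.1 ^+ 2 + b.2 ^+ 2) = b.2 * (a.1 * b.1 + a.2 * b.2) - b.1 * (a.1 * b.2 - a.2 * b.1).
    by ring.
  rewrite ab0 mulr0 subr0 pmulr_rgt0 //.
- by move: ab0; rewrite b2; nra.
- by move: ab0; rewrite a2; nra.
- by rewrite a2 b2; nra.
Qed.

Lemma pangle_eq a b : a != 0 -> b != 0 -> cross a b = 0 -> 0 < dot a b -> pangle a = pangle b.
Proof.
move=> a0 b0 ab0 dab.
have angle_eq x y : upper x -> upper y -> cross x y = 0 -> upper_angle x = upper_angle y.
  by move=> ux uy xy0; apply/le_anti; rewrite !upper_angle_le // [cross y x]crossC xy0 oppr0 lexx.
rewrite /pangle; case: (boolP (upper a)) => ua; case: (boolP (upper b)) => ub.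
- exact: angle_eq.
- have ub' : upper (- b) by rewrite upperN.
  have := upper_cross0_dot_gt0 ua ub'; rewrite crossNr ab0 oppr0 => /(_ erefl).
  by move: dab; rewrite /dot /=; lra.
- have ua' : upper (- a) by rewrite upperN.
  have := upper_cross0_dot_gt0 ua' ub; rewrite crossNl ab0 oppr0 => /(_ erefl).
  by move: dab; rewrite /dot /=; lra.
- by rewrite (angle_eq (- a) (- b)) ?upperN // crossNl crossNr ab0 !oppr0.
Qed.

Lemma upper_angle_surj s : 0 <= s < 2 -> exists2 d, upper d & upper_angle d = s.
Proof.
move=> /andP[s0 s2]; exists (1 - s, 1 - `|1 - s|); rewrite /upper /upper_angle /=.
  case: (ltrP 0 (1 - `|1 - s|)) => [//|h]; apply/orP; right.
  have -> : s = 0 by move: h; case: (ler0P (1 - s)); lra.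
  by rewrite subr0 normr1 subrr eqxx ltr01.
by rewrite (addrC `|_|) subrK divr1; ring.
Qed.

Lemma pangle_surj s : 0 <= s < 4 -> exists2 d, d != 0 & pangle d = s.
Proof.
move=> /andP[s0 s4]; case: (ltrP s 2) => s2.
  have [d ud <-] : exists2 d, upper d & upper_angle d = s by apply: upper_angle_surj; lra.
  by exists d; rewrite ?upper_neq0 // /pangle ud.
have [d ud gd] : exists2 d, upper d & upper_angle d = s - 2.
  by apply: upper_angle_surj; lra.
exists (- d); first by rewrite oppr_eq0 upper_neq0.
by rewrite /pangle upperN ?upper_neq0 // ud opprK gd; ring.
Qed.

Definition pangle_lift a t := exists m : int, t = pangle a + 4 * m%:~R.

Lemma pangle_liftD4 a t : pangle_lift a t -> pangle_lift a (t + 4).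
Proof. by case=> m ->; exists (m + 1); rewrite intrD; ring. Qed.

Lemma pangle_lift_sub a b s t : a != 0 -> b != 0 ->
  pangle_lift a s -> pangle_lift b t -> 0 <= t - s < 4 ->
  t - s = pangle b - pangle a \/ t - s = pangle b - pangle a + 4.
Proof.
move=> a0 b0 [ma ->] [mb ->]; rewrite -(subrK ma mb) intrD.
have /andP[? ?] := pangle_bound a0; have /andP[? ?] := pangle_bound b0.
move: (mb - ma) => m /andP[? ?].
by case: (@intr_range01 R m) => [||->|->]; rewrite ?mulr0 ?mulr1; lra.
Qed.

Lemma cross_ge0_lift a b s t : a != 0 -> b != 0 ->
  pangle_lift a s -> pangle_lift b t -> 0 <= t - s <= 2 -> 0 <= cross a b.
Proof.
move=> a0 b0 la lb /andP[? ?]; rewrite cross_ge0_pangle //.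
have /andP[? ?] := pangle_bound a0; have /andP[? ?] := pangle_bound b0.
by case: (pangle_lift_sub a0 b0 la lb) => [|e|e]; [lra|apply/orP; left|apply/orP; right]; lra.
Qed.

Lemma cross_gt0_lift a b s t : a != 0 -> b != 0 ->
  pangle_lift a s -> pangle_lift b t -> 0 < t - s < 2 -> 0 < cross a b.
Proof.
move=> a0 b0 la lb /andP[? ?]; rewrite ltNge -oppr_ge0 -crossC cross_ge0_pangle //.
have /andP[? ?] := pangle_bound a0; have /andP[? ?] := pangle_bound b0.
by case: (pangle_lift_sub a0 b0 la lb) => [|e|e]; [lra|..]; repeat case: lerP => //= ?; lra.
Qed.

Lemma dot_lt0_lift a b s t : a != 0 -> b != 0 ->
  pangle_lift a s -> pangle_lift b t -> 0 < t - s < 4 -> cross a b = 0 -> dot a b < 0.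
Proof.
move=> a0 b0 la lb /andP[? ?] ab0; have := cross_dot_neq0 a0 b0 ab0.
case: ltrgtP => // dab _; have := pangle_eq a0 b0 ab0 dab.
by case: (pangle_lift_sub a0 b0 la lb) => [|e|e]; lra.
Qed.

End PseudoAngle.

Lemma pangle_lift_surj (R : realType) (t : R) : exists2 d, d != 0 & pangle_lift d t.
Proof.
set m := Num.floor (t / 4).
have [d d0 dt] : exists2 d, d != 0 & pangle d = t - 4 * m%:~R.
  apply: pangle_surj; have := floor_le (t / 4); have := floorD1_gt (t / 4).
  by rewrite -/m intrD; lra.
by exists d => //; exists m; rewrite dt; ring.
Qed.

Section ZeroInHull.
Variable R : realType.
Implicit Types x y z : R * R.

Definition zero_in_hull3 x y z := exists c1 c2 c3 : R,
  [/\ 0 <= c1, 0 <= c2, 0 <= c3, 0 < c1 + c2 + c3 &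
      (c1 * x.1 + c2 * y.1 + c3 * z.1, c1 * x.2 + c2 * y.2 + c3 * z.2) = (0, 0)].

Lemma zero_in_hull3_rot x y z : zero_in_hull3 z x y -> zero_in_hull3 x y z.
Proof.
by case=> c1 [c2 [c3 [? ? ? ? [? ?]]]]; exists c2, c3, c1; split; try congr (_, _); lra.
Qed.

Lemma zero_in_hull3_cross x y z :
  0 <= cross y z -> 0 <= cross z x -> 0 <= cross x y ->
  0 < cross y z + cross z x + cross x y -> zero_in_hull3 x y z.
Proof.
by exists (cross y z), (cross z x), (cross x y); split; rewrite // /cross; congr (_, _); ring.
Qed.

Lemma zero_in_hull3_opp x y z : cross x y = 0 -> dot x y < 0 -> zero_in_hull3 x y z.
Proof.
move=> xy0 dxy; have yy : 0 <= dot y y by rewrite /dot -!expr2 addr_ge0 ?sqr_ge0.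
exists (dot y y), (- dot x y), 0; split; [lra..|congr (_, _)].
- by transitivity (y.2 * cross x y); [rewrite /dot /cross; ring | rewrite xy0 mulr0].
- by transitivity (- y.1 * cross x y); [rewrite /dot /cross; ring | rewrite xy0 mulr0].
Qed.

Lemma zero_in_hull3_arcs x y z tx ty tz : x != 0 -> y != 0 -> z != 0 ->
  pangle_lift x tx -> pangle_lift y ty -> pangle_lift z tz ->
  0 <= ty - tx <= 2 -> 0 <= tz - ty <= 2 -> 0 <= tx + 4 - tz <= 2 ->
  zero_in_hull3 x y z.
Proof.
move=> x0 y0 z0 lx ly lz gxy gyz gzx.
have cxy := cross_ge0_lift x0 y0 lx ly gxy.
have cyz := cross_ge0_lift y0 z0 ly lz gyz.
have czx := cross_ge0_lift z0 x0 lz (pangle_liftD4 lx) gzx.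
case: (ltrP 0 (cross y z + cross z x + cross x y)) => [|?].
  exact: zero_in_hull3_cross.
(* All three cross products vanish.  The arcs add up to a full turn, so one of
   them is positive, and its end points are then opposite. *)
case/andP: gxy gyz gzx => ? ? /andP[? ?] /andP[? ?].
have [gxy|[gyz|gzx]] : 0 < ty - tx \/ 0 < tz - ty \/ 0 < tx + 4 - tz by lra.
- apply: zero_in_hull3_opp; first lra.
  by apply: dot_lt0_lift x0 y0 lx ly _ _; lra.
- do 2 apply: zero_in_hull3_rot; apply: zero_in_hull3_opp; first lra.
  by apply: dot_lt0_lift y0 z0 ly lz _ _; lra.
- apply: zero_in_hull3_rot; apply: zero_in_hull3_opp; first lra.
  by apply: dot_lt0_lift z0 x0 lz (pangle_liftD4 lx) _ _; lra.
Qed.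

End ZeroInHull.

Lemma sum_delta (R : pzSemiRingType) n (j : 'I_n) (F : 'I_n -> R) :
  \sum_(i < n) (i == j)%:R * F i = F j.
Proof. by rewrite (bigD1 j) //= eqxx mul1r big1 ?addr0 // => i /negbTE ->; rewrite mul0r. Qed.

Lemma in_conv_of_hull3 (R : realType) n (a : 'I_n -> int * int) (p : R * R)
    (S : {set 'I_n}) i j k :
  i \in S -> j \in S -> k \in S ->
  zero_in_hull3 (ptR R (a i) - p) (ptR R (a j) - p) (ptR R (a k) - p) ->
  in_conv a S p.
Proof.
move=> iS jS kS [c1 [c2 [c3 [c1_ge0 c2_ge0 c3_ge0 C_gt0 [e1 e2]]]]].
set C := c1 + c2 + c3 in C_gt0; have C_neq0 : C != 0 by rewrite gt_eqF.
pose w l := c1 * (l == i)%:R + c2 * (l == j)%:R + c3 * (l == k)%:R.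
have sum_w F : \sum_l w l / C * F l = (c1 * F i + c2 * F j + c3 * F k) / C.
  transitivity ((\sum_l w l * F l) / C).
    by rewrite mulr_suml; apply: eq_bigr => l _; rewrite mulrAC.
  congr (_ / _); under eq_bigr => l _ do rewrite !mulrDl -!mulrA.
  by rewrite !big_split -!mulr_sumr !sum_delta.
exists (fun l => w l / C); split.
- by move=> l; rewrite divr_ge0 ?(ltW C_gt0) // /w !addr_ge0 ?mulr_ge0.
- move=> l lS; have [li lj lk] : [/\ l != i, l != j & l != k].
    by split; apply: contraNneq lS => ->.
  by rewrite /w (negbTE li) (negbTE lj) (negbTE lk) !mulr0 !addr0 mul0r.
- by have := sum_w (fun=> 1); under eq_bigr do rewrite mulr1; rewrite !mulr1 divff.
- rewrite sum_w -[RHS](mulfK C_neq0); congr (_ / _); move: e1 => /=; rewrite /C; lra.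
- rewrite sum_w -[RHS](mulfK C_neq0); congr (_ / _); move: e2 => /=; rewrite /C; lra.
Qed.

Lemma three_arcs (R : realDomainType) (x : nat -> R) m : (0 < m)%N ->
  {homo x : k l / (k <= l)%N >-> k <= l} -> (forall l, x l.+1 <= x l + 2) ->
  x m.-1 <= x 0%N + 4 <= x m.-1 + 2 ->
  exists q r, [/\ (q < m)%N, (r < m)%N, 0 <= x q - x 0%N <= 2,
                  0 <= x r - x q <= 2 & 0 <= x 0%N + 4 - x r <= 2].
Proof.
move=> m0 x_mono x_step wrap.
case: (boolP [exists l : 'I_m, x 0%N + 2 < x l]) => [/existsP far | /existsPn near].
  have /ex_minnP[l /andP[lm xl] l_min] : exists l, (l < m)%N && (x 0%N + 2 < x l).
    by case: far => l xl; exists l; rewrite ltn_ord.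
  have l0 : (0 < l)%N by case: l xl {lm l_min} => //; lra.
  have xl1 : x l.-1 <= x 0%N + 2.
    by rewrite leNgt; apply/negP => xl1; have := l_min l.-1; rewrite xl1 andbT; lia.
  have := x_step l.-1; rewrite prednK // => step.
  have := x_mono 0%N l.-1 isT; have := x_mono l.-1 l (leq_pred l).
  have lm1 : (l <= m.-1)%N by lia.
  have := x_mono l m.-1 lm1.
  by exists l.-1, l; split; [lia|lia|lra..].
have m1 : (m.-1 < m)%N by rewrite ltn_predL.
have := near (Ordinal m1); have := x_mono 0%N m.-1 isT.
by exists m.-1, m.-1; split; rewrite ?subrr ?lexx //=; lra.
Qed.

Section CyclicOrder.
Variables (R : realType) (n : nat) (a : 'I_n -> int * int) (p : R * R).
Variables (f : nat -> 'I_n) (T : nat -> R).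
Local Notation v i := (ptR R (a i) - p).

Hypothesis v_neq0 : forall i, v i != 0.
Hypothesis T_lift : forall k, pangle_lift (v (f k)) (T k).
Hypothesis T_mono : {homo T : k l / (k <= l)%N >-> k <= l}.
Hypothesis T_period : forall k, T (k + n)%N = T k + 4.
Hypothesis f_eq : forall k l, (f k == f l) = (k == l %[mod n]).
Hypothesis f_surj : forall i, exists2 k, (k < n)%N & f k = i.

Lemma f_periodic k m : f (k + m * n)%N = f k.
Proof. by apply/eqP; rewrite f_eq addnC modnMDl. Qed.

Lemma f_window j i : exists2 k, f k = i & (j <= k < j + n)%N.
Proof.
have [k kn <-] := f_surj i; have := divn_eq j n; have := ltn_pmod j (leq_ltn_trans (leq0n k) kn).
move: (j %/ n)%N (j %% n)%N => q r rn jqr.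
case: (leqP r k) => rk; first by exists (k + q * n)%N; rewrite ?f_periodic //; lia.
by exists (k + q.+1 * n)%N; rewrite ?f_periodic // mulSn; lia.
Qed.

Lemma gap2_of_depth2 : (1 < n)%N -> halfspace_depth_ge a p 2 -> forall j, T j.+2 <= T j + 2.
Proof.
move=> n1 depth j; rewrite leNgt; apply/negP => gap.
have T_j2 : T j.+2 <= T j + 4 by rewrite -T_period; apply: T_mono; lia.
(* Seen from p, the direction d lies a quarter-turn before the middle of the gap
   from rank j to rank j + 2: every point other than f j.+1 is then strictly
   less than a half-turn clockwise from d. *)
have [d d0 d_lift] := pangle_lift_surj ((T j + T j.+2) / 2 - 1).
have side i : i != f j.+1 -> 0 < cross (v i) d.
  move=> ij; have [k fk /andP[jk kj]] := f_window j i.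
  have k_lift : pangle_lift (v i) (T k) by rewrite -fk.
  have [kj_eq|jk2] : k = j \/ (j.+2 <= k)%N.
    by case: (ltngtP k j.+1) => [|? |kj1]; [|right|move: ij; rewrite -fk kj1 eqxx]; lia.
  - rewrite kj_eq in k_lift.
    by apply: cross_gt0_lift (v_neq0 i) d0 k_lift d_lift _; lra.
  - apply: cross_gt0_lift (v_neq0 i) d0 k_lift (pangle_liftD4 d_lift) _.
    by have := T_mono jk2; have := T_mono (ltnW kj); rewrite T_period; lra.
pose u := (d.2, - d.1).
have u0 : u != (0, 0).
  by move: d0; rewrite [d]surjective_pairing /u !xpair_eqE oppr_eq0 andbC.
suff: (#|[set i | (dot u (ptR R (a i)) <= dot u p)%R]| <= 1)%N.
  by move/(leq_trans (depth u (dot u p) u0 (lexx _))).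
rewrite -(cards1 (f j.+1)); apply/subset_leq_card/subsetP => i; rewrite !inE.
apply: contraLR => ij; rewrite -ltNge.
by have := side i ij; rewrite /cross /dot /=; lra.
Qed.

Hypothesis T_gap2 : forall k, T k.+2 <= T k + 2.

Lemma in_conv_class (S : {set 'I_n}) c m : (0 < m)%N -> (2 * m.-1 <= n)%N ->
  T (c + n) <= T (c + 2 * m.-1) + 2 ->
  (forall l, (l < m)%N -> f (c + 2 * l) \in S) -> in_conv a S p.
Proof.
move=> m0 mn wrap inS; pose x l := T (c + 2 * l).
have x_mono : {homo x : k l / (k <= l)%N >-> k <= l}.
  by move=> k l kl; apply: T_mono; rewrite leq_add2l leq_mul2l kl orbT.
have x_step l : x l.+1 <= x l + 2 by rewrite /x mulnS addnCA addnC addn2; exact: T_gap2.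
have : x m.-1 <= x 0%N + 4 <= x m.-1 + 2.
  rewrite /x muln0 addn0 -T_period wrap andbT; apply: T_mono; lia.
case/(three_arcs m0 x_mono x_step) => q [r [qm rm arc1 arc2 arc3]].
apply: (in_conv_of_hull3 (inS _ m0) (inS _ qm) (inS _ rm)).
exact: zero_in_hull3_arcs (T_lift _) (T_lift _) (T_lift _) arc1 arc2 arc3.
Qed.

(* The second hypothesis closes the cycle of odd ranks when n is odd. *)
Lemma parity_split : (1 < n)%N -> T n.+1 <= T (n - 2)%N + 2 ->
  exists S, in_conv a S p /\ in_conv a (~: S) p.
Proof.
move=> n1 wrap_odd; have := odd_double_half n; rewrite -mul2n; set h := n./2 => n_h.
have wrap_even : T n <= T (n - 2)%N + 2 by have := T_gap2 (n - 2); rewrite -addn2 subnK.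
pose S := [set f k | k : 'I_n & ~~ odd k]; exists S; split.
- apply: (in_conv_class (c := 0) (m := n - h)); rewrite ?add0n; try lia.
    by apply: le_trans wrap_even _; rewrite lerD2r; apply: T_mono; lia.
  move=> l lm; apply/imsetP; have ln : (2 * l < n)%N by lia.
  by exists (Ordinal ln); rewrite // inE /= oddM.
- apply: (in_conv_class (c := 1) (m := h)); try lia.
    by rewrite add1n; apply: le_trans wrap_odd _; rewrite lerD2r; apply: T_mono; lia.
  move=> l lm; rewrite in_setC; apply/imsetP => -[k]; rewrite inE => k_even.
  move/eqP; rewrite f_eq !modn_small //; last lia.
  by move/eqP=> e; move: k_even; rewrite -e /= oddM.
Qed.

End CyclicOrder.

Lemma cyclic_order_split (R : realType) n (a : 'I_n -> int * int) (p : R * R)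
    (f : nat -> 'I_n) (T : nat -> R) :
  (6 <= n)%N -> (forall i, ptR R (a i) - p != 0) ->
  (forall k, pangle_lift (ptR R (a (f k)) - p) (T k)) ->
  {homo T : k l / (k <= l)%N >-> k <= l} ->
  (forall k, T (k + n)%N = T k + 4) ->
  (forall k l, (f k == f l) = (k == l %[mod n])) ->
  (forall k, T k.+2 <= T k + 2) ->
  exists S, in_conv a S p /\ in_conv a (~: S) p.
Proof.
move=> n6 v_neq0 T_lift T_mono T_period f_eq T_gap2.
have n1 : (1 < n)%N by lia.
have [wrap|wrap] := lerP (T n.+1) (T (n - 2)%N + 2).
  exact: parity_split wrap.
(* As 6 <= n, the three-step gaps from T (n - 2) to T (n + 1) and from T (n + 1)
   to T (n + 4) fit in one turn: restart the enumeration at rank 3. *)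
have wrap' : T (n + 4)%N <= T n.+1 + 2.
  have n4 : (n + 4 <= n - 2 + n)%N by lia.
  by have := T_mono _ _ n4; rewrite T_period; lra.
apply: (@parity_split _ _ a p (fun k => f (k + 3)%N) (fun k => T (k + 3)%N)).
- exact: v_neq0.
- by move=> k; apply: T_lift.
- by move=> k l kl; apply: T_mono; rewrite leq_add2r.
- by move=> k; rewrite addnAC T_period.
- by move=> k l; rewrite f_eq eqn_modDr.
- by move=> k; rewrite !addSn; apply: T_gap2.
- exact: n1.
- have -> : (n - 2 + 3 = n.+1)%N by lia.
  by have -> : (n.+1 + 3 = n + 4)%N by lia.
Qed.

Section CyclicEnumeration.
Variables (R : realType) (n : nat) (theta : 'I_n -> R) (i0 : 'I_n).

Let s := sort (fun i j => theta i <= theta j) (enum 'I_n).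
Let n_gt0 : (0 < n)%N := leq_ltn_trans (leq0n i0) (ltn_ord i0).
Let size_s : size s = n. Proof. by rewrite size_sort size_enum_ord. Qed.

Definition cyc_index k : 'I_n := nth i0 s (k %% n).
Definition cyc_angle k : R := theta (cyc_index k) + 4 * (k %/ n)%:R.

Lemma cyc_index_eq k l : (cyc_index k == cyc_index l) = (k == l %[mod n]).
Proof. by rewrite nth_uniq ?size_s ?ltn_pmod // sort_uniq enum_uniq. Qed.

Lemma cyc_index_surj i : exists2 k, (k < n)%N & cyc_index k = i.
Proof.
have i_s : (index i s < n)%N by rewrite -[X in (_ < X)%N]size_s index_mem mem_sort mem_enum.
by exists (index i s); rewrite // /cyc_index modn_small // nth_index // mem_sort mem_enum.
Qed.

Lemma cyc_angle_period k : cyc_angle (k + n) = cyc_angle k + 4.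
Proof.
by rewrite /cyc_angle /cyc_index modnDr divnDr ?dvdnn // divnn n_gt0 natrD mulrDr mulr1 addrA.
Qed.

Lemma cyc_angle_mono : (forall i, 0 <= theta i < 4) ->
  {homo cyc_angle : k l / (k <= l)%N >-> k <= l}.
Proof.
move=> theta_bound k l kl; rewrite /cyc_angle.
have [same_turn|] := eqVneq (k %/ n)%N (l %/ n)%N.
  have le_tr : transitive (fun i j : 'I_n => theta i <= theta j) by move=> ? ? ?; apply: le_trans.
  have s_sorted : sorted (fun i j => theta i <= theta j) s.
    by apply: sort_sorted => i j; apply: le_total.
  rewrite same_turn lerD2r; apply: (sorted_leq_nth le_tr (fun i => lexx _) i0 s_sorted).
  - by rewrite inE size_s ltn_pmod.
  - by rewrite inE size_s ltn_pmod.
  by have := divn_eq k n; have := divn_eq l n; rewrite same_turn; lia.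
move=> next_turn; have : ((k %/ n).+1 <= l %/ n)%N by rewrite ltn_neqAle next_turn leq_div2r.
rewrite -(ler_nat R) -addn1 natrD.
by have := theta_bound (cyc_index k); have := theta_bound (cyc_index l); lra.
Qed.

End CyclicEnumeration.

Theorem lemma3 (R : realType) (n : nat) (a : 'I_n -> int * int) (p : R * R) :
  (6 <= n)%N ->
  (forall i : 'I_n, p <> ptR R (a i)) ->
  halfspace_depth_ge a p 2 ->
  exists S : {set 'I_n}, in_conv a S p /\ in_conv a (~: S) p.
Proof.
move=> n6 p_notin depth.
have v_neq0 i : ptR R (a i) - p != 0 by rewrite subr_eq0; apply/eqP => /esym/p_notin.
have n_gt1 : (1 < n)%N by lia.
pose i0 : 'I_n := Ordinal (ltnW n_gt1).
pose theta i := pangle (ptR R (a i) - p).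
pose f := cyc_index theta i0; pose T := cyc_angle theta i0.
have T_lift k : pangle_lift (ptR R (a (f k)) - p) (T k) by exists (k %/ n)%N.
have T_mono := cyc_angle_mono i0 (fun i => pangle_bound (v_neq0 i)).
have T_period := cyc_angle_period theta i0.
have f_eq := cyc_index_eq theta i0.
have T_gap2 := gap2_of_depth2 v_neq0 T_lift T_mono T_period f_eq
  (cyc_index_surj theta i0) n_gt1 depth.
exact: cyclic_order_split n6 v_neq0 T_lift T_mono T_period f_eq T_gap2.
Qed.
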